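(* Let $d$ be a positive integer, and let $T$ be the rooted tree with root $r$ in which every leaf has depth $d$ and every non-leaf vertex has degree $3$. Let $p\in[0,1]$ and let $S$ be a random subset of $V(T)$ containing each vertex independently with probability $p$. Then $$\mathbf{P}\left[w_{(T,S)}(r)<1\right]\leq\frac{p}{2}+\frac{3}{2}e^{-pd}.$$
   Context: For a graph $G$, a set $S\subseteq V(G)$, and vertices $u,v$ with $u\in S$ or $v\in S$, ${\rm dist}_{(G,S)}(u,v)$ is the minimum number of edges of a path $P$ in $G$ between $u$ and $v$ such that $S$ contains exactly one endvertex of $P$ and no internal vertex of $P$, and $\infty$ if no such path exists (so ${\rm dist}_{(G,S)}(u,u)=0$ for $u\in S$). For $u\in V(G)$, $w_{(G,S)}(u)=\sum_{v\in S}(1/2)^{{\rm dist}_{(G,S)}(u,v)-1}$ with $(1/2)^{\infty}=0$. The depth of a vertex in a rooted tree is its distance from the root. *)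

From mathcomp Require Import all_boot.
From Stdlib Require Import Reals.
Set Implicit Arguments. Unset Strict Implicit. Unset Printing Implicit Defensive.

Section Dist.
Variables (T : finType) (e : rel T) (S : {set T}).

(* The vertex sequence u :: q is a path of G (consecutive vertices adjacent,
   no repeated vertex) such that S contains exactly one endvertex
   (for q = [::] the only endvertex is u) and no internal vertex. *)
Definition adm_path (u : T) (q : seq T) : bool :=
  [&& path e u q, uniq (u :: q),
      (if q is [::] then u \in S else (u \in S) != (last u q \in S)) &
      all (fun x => x \notin S) (behead (belast u q))].

Definition has_adm_path (u v : T) (k : nat) : bool :=
  [exists t : k.-tuple T, adm_path u t && (last u t == v)].

(* minimum number of edges of such a path; None encodes infinity.
   (A path without repeated vertices has fewer than #|T| edges.) *)
Definition distGS (u v : T) : option nat :=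
  let k := find (has_adm_path u v) (iota 0 #|T|) in
  if (k < #|T|)%nat then Some k else None.

(* w_(G,S)(u) = sum_{v in S} (1/2)^(dist(u,v) - 1), with (1/2)^infinity = 0 *)
Definition wGS (u : T) : R :=
  \big[Rplus/0%R]_(v in S)
     match distGS u v with
     | Some k => powerRZ (/ 2) (Z.of_nat k - 1)
     | None => 0%R
     end.
End Dist.

(* Vertices: the root (None), or Some (i, t) with i < 3 and t a word over {0,1}
   of length k < d; this vertex has depth k+1 and is reached from the root by
   going to child i, then following t.  Root has 3 children, every other vertex
   of depth < d has 2 children, leaves are exactly the vertices of depth d. *)
Definition treeV (d : nat) : finType := option ('I_3 * {k : 'I_d & k.-tuple 'I_2}).

Definition tcode (d : nat) (v : treeV d) : seq nat :=
  match v with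
  | None => [::]
  | Some (i, t) => (i : nat) :: map (@nat_of_ord 2) (tagged t)
  end.

Definition tchild (d : nat) (u v : treeV d) : bool :=
  (size (tcode v) == (size (tcode u)).+1) && (tcode u == take (size (tcode u)) (tcode v)).

Definition tadj (d : nat) : rel (treeV d) := fun u v => tchild u v || tchild v u.

Definition troot (d : nat) : treeV d := None.

Definition probSubset (V : finType) (p : R) (A : {set V}) : R :=
  (p ^ #|A| * (1 - p) ^ (#|V| - #|A|)%nat)%R.

Definition probW_lt1 (d : nat) (p : R) : R :=
  \big[Rplus/0%R]_(S : {set treeV d})
     (if Rlt_dec (wGS (@tadj d) S (troot d)) 1 then probSubset p S else 0%R).

From mathcomp Require Import all_boot.
From Stdlib Require Import Reals Lra Lia.
(* Reals shadows ssrnat's [_ ^ _] on [nat] by [Nat.pow]. *)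
Import ssrnat.
From HB Require Import structures.

(* If the root r lies in S, its own term already gives w(r) >= 2.  Otherwise
   send every leaf whose root-leaf path meets S to the first vertex v of S on
   that path, say at depth k+1: the path from r to v is admissible, so v
   contributes at least 2^-k to w(r), and at most 2^(d-1-k) of the 3*2^(d-1)
   leaves are sent to v.  Hence w(r) >= 2^(1-d) * #{leaves whose path meets S},
   and w(r) < 1 forces more than 2^d leaves whose d non-root path vertices all
   avoid S.  Markov's inequality then bounds P[w(r) < 1] by
   2^-d * 3*2^(d-1) * (1-p)^d = 3/2 (1-p)^d <= 3/2 e^(-pd). *)

Set Implicit Arguments.
Unset Strict Implicit.
Unset Printing Implicit Defensive.

HB.instance Definition _ := Monoid.isComLaw.Build R 0%R Rplus
  (fun x y z => esym (Rplus_assoc x y z)) Rplus_comm Rplus_0_l.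
HB.instance Definition _ := Monoid.isComLaw.Build R 1%R Rmult
  (fun x y z => esym (Rmult_assoc x y z)) Rmult_comm Rmult_1_l.
HB.instance Definition _ := Monoid.isMulLaw.Build R 0%R Rmult Rmult_0_l Rmult_0_r.
HB.instance Definition _ :=
  Monoid.isAddLaw.Build R Rmult Rplus Rmult_plus_distr_r Rmult_plus_distr_l.

Section RealBigops.
Variable I : finType.

Lemma sum_const_card (P : pred I) (c : R) :
  \big[Rplus/0%R]_(i | P i) c = (INR #|P| * c)%R.
Proof.
rewrite big_const_seq -size_filter cardE /enum_mem size_filter.
elim: (count P _) => [|k IH]; first by rewrite /=; lra.
rewrite S_INR /= IH; lra.
Qed.

Lemma prod_const_card (P : pred I) (c : R) :
  \big[Rmult/1%R]_(i | P i) c = (c ^ #|P|)%R.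
Proof.
rewrite big_const_seq -size_filter cardE /enum_mem size_filter.
by elim: (count P _) => //= k ->.
Qed.

Lemma ler_sum (P : pred I) (F G : I -> R) :
  (forall i, P i -> F i <= G i)%R ->
  (\big[Rplus/0%R]_(i | P i) F i <= \big[Rplus/0%R]_(i | P i) G i)%R.
Proof. by move=> leFG; elim/big_ind2: _ => // *; lra. Qed.

Lemma sum_ge0 (P : pred I) (F : I -> R) :
  (forall i, P i -> 0 <= F i)%R -> (0 <= \big[Rplus/0%R]_(i | P i) F i)%R.
Proof. by move=> F_ge0; elim/big_ind: _ => // *; lra. Qed.

End RealBigops.

Section RandomSubset.
Variables (V : finType) (p : R).

Lemma probSubset_ge0 (S : {set V}) : (0 <= p <= 1)%R -> (0 <= probSubset p S)%R.
Proof. by move=> p01; apply: Rmult_le_pos; apply: pow_le; lra. Qed.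

Lemma probSubsetE (S : {set V}) :
  probSubset p S = \big[Rmult/1%R]_(v : V) (if v \in S then p else 1 - p)%R.
Proof.
rewrite (bigID [in S]) /=.
rewrite [X in (X * _)%R](eq_bigr (fun _ => p)); last by move=> v ->.
rewrite [X in (_ * X)%R](eq_bigr (fun _ => 1 - p)%R); last by move=> v /negbTE ->.
by rewrite !prod_const_card /probSubset -(cardC S) addKn.
Qed.

Lemma sum_probSubset_disjoint (A : {pred V}) :
  \big[Rplus/0%R]_(S : {set V} | [disjoint A & S]) probSubset p S = ((1 - p) ^ #|A|)%R.
Proof.
pose g v (b : bool) := if b then (if v \in A then 0 else p)%R else (1 - p)%R.
rewrite big_mkcond /=.
rewrite (eq_bigr (fun S : {set V} => \big[Rmult/1%R]_v g v (v \in S))) => [|S _]; last first.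
  rewrite probSubsetE; case: ifP => [AS | /negbT].
    by apply: eq_bigr => v _; rewrite /g; case: ifP => // vS; rewrite (disjointFl AS vS).
  rewrite disjoint_subset => /subsetPn [v vA]; rewrite inE negbK => vS.
  by rewrite (bigD1 v) //= /g vS vA Rmult_0_l.
rewrite (reindex (fun f : {ffun V -> bool} => [set v | f v])); last first.
  exists (fun S : {set V} => [ffun v => v \in S]) => [f _ | S _].
    by apply/ffunP => v; rewrite ffunE inE.
  by apply/setP => v; rewrite inE ffunE.
rewrite (eq_bigr (fun f : {ffun V -> bool} => \big[Rmult/1%R]_v g v (f v))) => [|f _]; last first.
  by apply: eq_bigr => v _; rewrite inE.
rewrite -(bigA_distr_bigA g).
rewrite (eq_bigr (fun v => if v \in A then 1 - p else 1)%R) => [|v _]; last first.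
  by rewrite big_bool /g; case: (v \in A) => /=; lra.
by rewrite -big_mkcond prod_const_card.
Qed.

End RandomSubset.

Definition dist_weight (o : option nat) : R :=
  if o is Some k then powerRZ (/ 2) (Z.of_nat k - 1) else 0%R.

Lemma dist_weight_ge0 o : (0 <= dist_weight o)%R.
Proof. by case: o => [k|] /=; [apply: powerRZ_le | ]; lra. Qed.

Lemma half_pow_le m k : (m <= k)%N -> ((/ 2) ^ k <= (/ 2) ^ m)%R.
Proof.
move=> le_mk; rewrite !pow_inv; apply: Rinv_le_contravar; first by apply: pow_lt; lra.
by apply: Rle_pow; [lra | apply/leP].
Qed.

Lemma dist_weight_ge m k : (m <= k)%N -> ((/ 2) ^ k.-1 <= dist_weight (Some m))%R.
Proof.
case: m => [_ | m le_mk]; rewrite /dist_weight.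
  have -> : powerRZ (/ 2) (Z.of_nat 0 - 1) = 2%R by rewrite /=; field.
  have := half_pow_le (leq0n k.-1); rewrite /=; lra.
have -> : (Z.of_nat m.+1 - 1)%Z = Z.of_nat m by lia.
by rewrite -pow_powerRZ; apply: half_pow_le; rewrite -ltnS prednK // (leq_trans _ le_mk).
Qed.

Lemma find_leq (T : Type) (a : pred T) (s : seq T) x0 i : a (nth x0 s i) -> (find a s <= i)%N.
Proof. by move=> ai; rewrite leqNgt; apply/negP => /(before_find x0); rewrite ai. Qed.

Section Weight.
Variables (T : finType) (e : rel T) (S : {set T}).

Lemma wGSE u : wGS e S u = \big[Rplus/0%R]_(v in S) dist_weight (distGS e S u v).
Proof. by []. Qed.

Lemma distGS_adm_path u q : adm_path e S u q ->
  exists2 m, (m <= size q)%N & distGS e S u (last u q) = Some m.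
Proof.
move=> adm_q; pose k := find (has_adm_path e S u (last u q)) (iota 0 #|T|).
have lt_q : (size q < #|T|)%N.
  by case/and4P: adm_q => _ /card_uniqP /= <- _ _; apply: max_card.
have le_kq : (k <= size q)%N.
  apply: (find_leq (x0 := 0%N)); rewrite nth_iota // add0n.
  by apply/existsP; exists (in_tuple q); rewrite adm_q eqxx.
by exists k; rewrite // /distGS -/k (leq_ltn_trans le_kq lt_q).
Qed.

Lemma dist_weight_adm_path u q : adm_path e S u q ->
  ((/ 2) ^ (size q).-1 <= dist_weight (distGS e S u (last u q)))%R.
Proof. by case/distGS_adm_path => m le_mq ->; apply: dist_weight_ge. Qed.

Lemma wGS_ge1 u : u \in S -> (1 <= wGS e S u)%R.
Proof.
move=> uS; have adm0 : adm_path e S u [::] by rewrite /adm_path /= uS.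
apply: Rle_trans (dist_weight_adm_path adm0) _.
rewrite wGSE (bigD1 u) //=.
suff : (0 <= \big[Rplus/0%R]_(v | (v \in S) && (v != u)) dist_weight (distGS e S u v))%R by lra.
by apply: sum_ge0 => v _; apply: dist_weight_ge0.
Qed.

End Weight.

Lemma INR_expn2 m : INR (2 ^ m) = (2 ^ m)%R.
Proof. by elim: m => [|m IH] //; rewrite expnS mult_INR IH /=; lra. Qed.

Lemma pow2_mul_half_pow k m : (2 ^ m * (/ 2) ^ (k + m) = (/ 2) ^ k)%R.
Proof.
rewrite pow_add Rmult_comm Rmult_assoc -Rpow_mult_distr Rinv_l; last lra.
by rewrite pow1 Rmult_1_r.
Qed.

Section Tree.
Variable n : nat.
Local Notation V := (treeV n.+1).
Local Notation leaf := ('I_3 * n.-tuple 'I_2)%type.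
Local Notation root := (troot n.+1).
Local Notation adj := (@tadj n.+1).

Definition lcode (x : leaf) : seq nat := (x.1 : nat) :: map (@nat_of_ord 2) x.2.

Lemma size_lcode x : size (lcode x) = n.+1.
Proof. by rewrite /= size_map size_tuple. Qed.

Lemma lcode_inj : injective lcode.
Proof. by case=> [i t] [i' t'] [/val_inj -> /(inj_map val_inj)/val_inj ->]. Qed.

Lemma card_leaf : #|{: leaf}| = (3 * 2 ^ n)%N.
Proof. by rewrite card_prod card_tuple !card_ord. Qed.

(* [anc x j] is the ancestor at depth [j] of the leaf coded by [x]; it is
   meaningful only for [j <= n.+1], [inord] making it total. *)
Definition anc (x : leaf) (j : nat) : V :=
  if j is k.+1 then
    Some (x.1, Tagged (fun i : 'I_n.+1 => i.-tuple 'I_2)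
                 (insubd (nseq_tuple (@inord n k) ord0) (take (@inord n k) x.2)))
  else root.

Lemma tcode_anc x j : (j <= n.+1)%N -> tcode (anc x j) = take j (lcode x).
Proof.
case: j => [//|k] /= le_kn.
by rewrite val_insubd inordK // size_takel ?size_tuple // eqxx map_take.
Qed.

Lemma size_tcode_anc x j : (j <= n.+1)%N -> size (tcode (anc x j)) = j.
Proof. by move=> le_jn; rewrite tcode_anc // size_takel // size_lcode. Qed.

Lemma tadj_anc x j : (j <= n)%N -> tadj (anc x j) (anc x j.+1).
Proof.
move=> le_jn; have le_jn1 := leqW le_jn.
apply/orP; left; rewrite /tchild !tcode_anc // !size_takel ?size_lcode //.
by rewrite take_takel ?leqnSn // !eqxx.
Qed.

Definition branch (x : leaf) : seq V := [seq anc x j | j <- iota 1 n.+1].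

Lemma size_branch x : size (branch x) = n.+1.
Proof. by rewrite size_map size_iota. Qed.

Lemma nth_branch x v i : (i <= n)%N -> nth v (branch x) i = anc x i.+1.
Proof. by move=> le_in; rewrite (nth_map 0%N) ?size_iota // nth_iota. Qed.

Lemma path_branch x : path adj root (branch x).
Proof.
apply/(pathP root) => i; rewrite size_branch ltnS => le_in.
rewrite nth_branch //; case: i le_in => [|i] le_in; first exact: tadj_anc.
by rewrite /= nth_branch ?(ltnW le_in) //; apply: tadj_anc.
Qed.

Lemma uniq_root_branch x : uniq (root :: branch x).
Proof.
have -> : root :: branch x = [seq anc x j | j <- iota 0 n.+2] by [].
apply: (map_uniq (f := fun v => size (tcode v))); rewrite -map_comp.
have -> : [seq size (tcode (anc x j)) | j <- iota 0 n.+2] = iota 0 n.+2.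
  rewrite -[RHS]map_id; apply/eq_in_map => j; rewrite mem_iota add0n.
  by case/andP=> _; apply: size_tcode_anc.
exact: iota_uniq.
Qed.

Lemma card_anc_eq x k : (k <= n)%N ->
  (#|[pred y | anc y k.+1 == anc x k.+1]| <= 2 ^ (n - k))%N.
Proof.
move=> le_kn.
have take_lcode y : anc y k.+1 = anc x k.+1 -> take k.+1 (lcode y) = take k.+1 (lcode x).
  by move=> e; rewrite -!tcode_anc // e.
have inj_drop :
    {in [pred y | anc y k.+1 == anc x k.+1] &, injective (fun y => drop_tuple k y.2)}.
  move=> y z /eqP/take_lcode ey /eqP/take_lcode ez /(congr1 val) /= dyz.
  apply: lcode_inj; rewrite -(cat_take_drop k.+1 (lcode y)) -(cat_take_drop k.+1 (lcode z)).
  by rewrite ey ez /= -!map_drop dyz.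
rewrite -(card_in_imset inj_drop); apply: leq_trans (max_card _) _.
by rewrite card_tuple card_ord.
Qed.

Section FirstHit.
Variable S : {set V}.

Definition hits x := has [in S] (branch x).
Definition first_hit x := find [in S] (branch x).
Definition hit_vertex x := anc x (first_hit x).+1.

Lemma first_hit_le x : hits x -> (first_hit x <= n)%N.
Proof. by rewrite /hits has_find size_branch. Qed.

Lemma hit_vertex_in x : hits x -> hit_vertex x \in S.
Proof.
by move=> hx; rewrite /hit_vertex -(nth_branch x root) ?first_hit_le //; apply: nth_find.
Qed.

Lemma take_first_hit x : hits x ->
  take (first_hit x).+1 (branch x) = rcons (take (first_hit x) (branch x)) (hit_vertex x).
Proof.
move=> hx; have le_hn := first_hit_le hx.
by rewrite (take_nth root) ?size_branch ?ltnS // nth_branch.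
Qed.

Lemma adm_path_first_hit x : root \notin S -> hits x ->
  adm_path adj S root (take (first_hit x).+1 (branch x)).
Proof.
move=> rootS hx; apply/and4P; split.
- exact/take_path/path_branch.
- exact: (take_uniq (first_hit x).+2 (uniq_root_branch x)).
- rewrite take_first_hit //; case: (take _ _) => [|v s] /=; rewrite ?last_rcons;
    by rewrite (negbTE rootS) hit_vertex_in.
- rewrite take_first_hit // belast_rcons /=.
  have := has_take (first_hit x) hx; rewrite ltnn => /negbT /hasPn notS.
  by apply/allP => v /notS.
Qed.

Lemma weight_hit_vertex x : root \notin S -> hits x ->
  ((/ 2) ^ first_hit x <= dist_weight (distGS adj S root (hit_vertex x)))%R.
Proof.
move=> rootS hx; have := dist_weight_adm_path (adm_path_first_hit rootS hx).
rewrite take_first_hit // size_rcons last_rcons size_takel // size_branch.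
by rewrite ltnW // ltnS first_hit_le.
Qed.

Lemma card_hits_le_wGS : root \notin S ->
  ((/ 2) ^ n * INR #|[pred x | hits x]| <= wGS adj S root)%R.
Proof.
move=> rootS; rewrite Rmult_comm -sum_const_card.
rewrite (partition_big hit_vertex [in S]) /=; last exact: hit_vertex_in.
rewrite wGSE; apply: ler_sum => v vS.
case: (pickP [pred x | hits x && (hit_vertex x == v)]) => [x0 | none]; last first.
  by rewrite big_pred0 //; apply: dist_weight_ge0.
case/andP=> hx0 /eqP <-; have le_kn := first_hit_le hx0; set k := first_hit x0 in le_kn *.
apply: Rle_trans (weight_hit_vertex rootS hx0); rewrite sum_const_card.
have sub_anc : [pred x | hits x && (hit_vertex x == hit_vertex x0)] \subset
               [pred y | anc y k.+1 == anc x0 k.+1].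
  apply/subsetP => y /andP [hy /eqP e]; rewrite inE /=.
  have : size (tcode (hit_vertex y)) = size (tcode (hit_vertex x0)) by rewrite e.
  rewrite !size_tcode_anc ?ltnS ?first_hit_le // => -[ek].
  by move: e; rewrite /hit_vertex ek => /eqP.
apply: Rle_trans (_ : INR (2 ^ (n - k)) * (/ 2) ^ n <= _)%R.
  apply: Rmult_le_compat_r; first by apply: pow_le; lra.
  by apply/le_INR/leP/(leq_trans (subset_leq_card sub_anc))/card_anc_eq.
by rewrite INR_expn2 -{2}(subnKC le_kn) pow2_mul_half_pow; apply: Rle_refl.
Qed.

Lemma wGS_lt1_misses : (wGS adj S root < 1)%R ->
  (2 < (/ 2) ^ n * INR #|[pred x | ~~ hits x]|)%R.
Proof.
move=> w_lt1; have rootS : root \notin S by apply/negP => /(wGS_ge1 adj); lra.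
have := card_hits_le_wGS rootS.
have : ((/ 2) ^ n * (INR #|[pred x | hits x]| + INR #|[pred x | ~~ hits x]|) = 3)%R.
  rewrite -plus_INR plusE (cardC [pred x | hits x]) card_leaf.
  rewrite mulnE mult_INR INR_expn2 pow_inv /=.
  by field; apply: pow_nonzero; lra.
lra.
Qed.

End FirstHit.

Lemma expected_misses p :
  \big[Rplus/0%R]_(S : {set V}) (probSubset p S * INR #|[pred x | ~~ hits S x]|)%R
  = (3 * 2 ^ n * (1 - p) ^ n.+1)%R.
Proof.
rewrite (eq_bigr (fun S => \big[Rplus/0%R]_(x : leaf | ~~ hits S x) probSubset p S)); last first.
  by move=> S _; rewrite sum_const_card Rmult_comm.
rewrite (exchange_big_dep predT) //=.
rewrite (eq_bigr (fun _ => (1 - p) ^ n.+1)%R) => [|x _]; last first.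
  rewrite (eq_bigl (fun S : {set V} => [disjoint branch x & S])); last first.
    by move=> S; rewrite disjoint_has.
  have := uniq_root_branch x; rewrite cons_uniq => /andP [_ /card_uniqP card_x].
  by rewrite sum_probSubset_disjoint card_x size_branch.
rewrite sum_const_card (eq_card (B := {: leaf})) // card_leaf mulnE mult_INR INR_expn2 /=.
ring.
Qed.

Lemma probW_lt1_le p : (0 <= p <= 1)%R -> (probW_lt1 n.+1 p <= 3 / 2 * (1 - p) ^ n.+1)%R.
Proof.
move=> p01; set a := ((/ 2) ^ n)%R; have a_ge0 : (0 <= a)%R by apply: pow_le; lra.
have -> : (3 / 2 * (1 - p) ^ n.+1 = a / 2 *
    \big[Rplus/0%R]_(S : {set V}) (probSubset p S * INR #|[pred x | ~~ hits S x]|))%R.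
  by rewrite expected_misses /a pow_inv; field; apply: pow_nonzero; lra.
rewrite big_distrr; apply: ler_sum => S _ /=.
have P_ge0 := probSubset_ge0 S p01; have M_ge0 := pos_INR #|[pred x | ~~ hits S x]|.
case: (Rlt_dec (wGS adj S root) 1) => [w_lt1 | _] /=.
  have := wGS_lt1_misses w_lt1; rewrite -/a => aM_gt2.
  suff : (0 <= probSubset p S * (a * INR #|[pred x | ~~ hits S x]| - 2))%R by lra.
  by apply: Rmult_le_pos; lra.
by apply: Rmult_le_pos; [lra | apply: Rmult_le_pos].
Qed.

End Tree.

Lemma exp_mul_INR x m : exp (x * INR m) = (exp x ^ m)%R.
Proof.
elim: m => [|m IH]; first by rewrite /= Rmult_0_r exp_0.
by rewrite S_INR /= -IH -exp_plus; congr exp; ring.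
Qed.

Lemma one_sub_pow_le_exp p m : (0 <= p <= 1)%R -> ((1 - p) ^ m <= exp (- (p * INR m)))%R.
Proof.
move=> p01; rewrite Ropp_mult_distr_l exp_mul_INR.
by apply: pow_incr; have := exp_ineq1_le (- p); lra.
Qed.

Theorem mainTheorem9 (d : nat) (hd : (0 < d)%nat) (p : R)
  (hp0 : (0 <= p)%R) (hp1 : (p <= 1)%R) :
  (probW_lt1 d p <= p / 2 + 3 / 2 * exp (- (p * INR d)))%R.
Proof.
case: d hd => [//|n] _; have p01 : (0 <= p <= 1)%R by split.
have := probW_lt1_le n p01; have := one_sub_pow_le_exp n.+1 p01; lra.
Qed.
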